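(* Let $n>1$, $a\in\mathcal{T}_n$, and consider the semigroup $(\mathcal{T}_n,*_a)$. Let $x\in\mathcal{T}_n$. If $\operatorname{rank}(x)\le\operatorname{rank}(a)$ and $|\operatorname{ran}(x)\cap M|\le1$ for every block $M$ of $\rho_a$, then $$R_x=\{y\in\mathcal{T}_n : \rho_y=\rho_x \text{ and } |\operatorname{ran}(y)\cap M|\le1 \text{ for every block } M \text{ of } \rho_a\}$$ and $|R_x|>1$. Otherwise $R_x=\{x\}$.
   Context: $\mathcal{T}_n$ is the set of all maps $N\to N$, $N=\{1,\dots,n\}$. Maps are composed from left to right: $(xy)(i)=y(x(i))$. For fixed $a\in\mathcal{T}_n$, $x*_a y:=xay$; $(\mathcal{T}_n,*_a)$ is a semigroup. $\operatorname{ran}(x)$ is the image of $x$, $\operatorname{rank}(x)=|\operatorname{ran}(x)|$, and $\rho_x$ is the partition of $N$ into the nonempty fibres of $x$ ($i,j$ in the same block iff $x(i)=x(j)$). Green's relations in a semigroup $S$: with $S^1$ the semigroup $S$ with an identity adjoined, $x\mathcal{L}y$ iff $S^1x=S^1y$, $x\mathcal{R}y$ iff $xS^1=yS^1$, $\mathcal{H}=\mathcal{L}\cap\mathcal{R}$, $\mathcal{D}=\mathcal{L}\circ\mathcal{R}$ (which equals $\mathcal{R}\circ\mathcal{L}$); $L_x,R_x,H_x,D_x$ denote the classes of $x$ in $(\mathcal{T}_n,*_a)$. *)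

From mathcomp Require Import all_boot.
Set Implicit Arguments. Unset Strict Implicit. Unset Printing Implicit Defensive.

(* T_n : all maps N -> N, N = {0,..,n-1} (a relabelling of {1,..,n}). *)
Definition Tn (n : nat) := {ffun 'I_n -> 'I_n}.

(* Left-to-right composition: (x y)(i) = y (x i). *)
Definition tcomp n (x y : Tn n) : Tn n := [ffun i => y (x i)].

Definition sand n (a x y : Tn n) : Tn n := tcomp (tcomp x a) y.

Definition rideal n (a x : Tn n) : {set Tn n} :=
  x |: [set sand a x u | u in [set: Tn n]].

Definition Rclass n (a x : Tn n) : {set Tn n} :=
  [set y | rideal a y == rideal a x].

Definition ran n (x : Tn n) : {set 'I_n} := [set x i | i in 'I_n].
Definition rank n (x : Tn n) : nat := #|ran x|.

Definition rho n (x : Tn n) : {set {set 'I_n}} :=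
  [set [set j | x j == x i] | i in 'I_n].

(* A map z lies in the principal right ideal x S^1 of (T_n, *_a) iff z = x or
   z factors through x a, i.e. the kernel of x a is contained in that of z.
   When ran x meets each block of rho_a at most once, a is injective on ran x,
   so ker (x a) = ker x and x S^1 is just {z | ker x <= ker z}; the R-class of
   x is then the set of such y with the same kernel, and an injective
   relabelling of ran x (moving one value off ran x, or reversing N when x is
   onto) produces a second element.  Otherwise some y in R_x other than x would
   give ker (x a) <= ker y <= ker (y a) <= ker x, i.e. x would be such a map. *)
From mathcomp Require Import all_boot perm.
Set Implicit Arguments. Unset Printing Implicit Defensive.

Section Kernels.
Variable n : nat.
Implicit Types (f x y z : Tn n).

Definition ker_sub f z := forall i j, f i = f j -> z i = z j.

Lemma ker_sub_refl x : ker_sub x x.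
Proof. by move=> i j. Qed.

Lemma ker_sub_trans x y z : ker_sub x y -> ker_sub y z -> ker_sub x z.
Proof. by move=> Hxy Hyz i j /Hxy /Hyz. Qed.

Lemma ker_sub_tcomp x y : ker_sub x (tcomp x y).
Proof. by move=> i j e; rewrite !ffunE e. Qed.

Lemma mem_tcomp_image f z :
  z \in [set tcomp f u | u in [set: Tn n]] <-> ker_sub f z.
Proof.
split=> [/imsetP [u _ ->] i j e | Hfz]; first by rewrite !ffunE e.
apply/imsetP.
exists [ffun k => if [pick i | f i == k] is Some i then z i else k] => //.
apply/ffunP => i; rewrite !ffunE.
case: pickP => [i' /eqP /Hfz -> // | /(_ i)]; by rewrite eqxx.
Qed.

Lemma rho_ker_sub x y : rho x = rho y -> ker_sub x y.
Proof.
move=> Exy i j e.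
have : [set k | x k == x i] \in rho y by rewrite -Exy; apply/imsetP; exists i.
case/imsetP => l _ El.
have : i \in [set k | y k == y l] by rewrite -El inE.
have : j \in [set k | y k == y l] by rewrite -El inE e.
by rewrite !inE => /eqP -> /eqP ->.
Qed.

Lemma eq_rho x y : ker_sub x y -> ker_sub y x -> rho x = rho y.
Proof.
move=> Hxy Hyx; apply: eq_imset => i; apply/setP => j; rewrite !inE.
by apply/eqP/eqP => [/Hxy | /Hyx].
Qed.

Lemma rho_comp_inj x (p : 'I_n -> 'I_n) :
  injective p -> rho [ffun i => p (x i)] = rho x.
Proof.
move=> p_inj; apply: eq_rho => i j; rewrite !ffunE; first exact: p_inj.
by move->.
Qed.

End Kernels.

Section SandwichRClasses.
Variables (n : nat) (a : Tn n).
Implicit Types (x y z : Tn n).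

Lemma mem_rideal x z :
  z \in rideal a x <-> z = x \/ ker_sub (tcomp x a) z.
Proof.
rewrite in_setU1; split=> [/orP [/eqP | /mem_tcomp_image] | [-> | /mem_tcomp_image]].
- by left.
- by right.
- by rewrite eqxx.
- by rewrite orbC => ->.
Qed.

Lemma mem_Rclass x y : y \in Rclass a x ->
  y = x \/ ker_sub (tcomp x a) y /\ ker_sub (tcomp y a) x.
Proof.
rewrite inE => /eqP Exy.
have /mem_rideal [->|Hxy] : y \in rideal a x by rewrite -Exy setU11.
  by left.
have /mem_rideal [->|Hyx] : x \in rideal a y by rewrite Exy setU11.
  by left.
by right.
Qed.

Definition ptransversal x := {in ran x &, injective a}.

Lemma ptransversal_ker x : ptransversal x <-> ker_sub (tcomp x a) x.
Proof.
split=> [x_tr i j | Hx _ _ /imsetP [i _ ->] /imsetP [j _ ->] e].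
  by rewrite !ffunE; apply: x_tr; apply/imsetP; [exists i | exists j].
by apply: Hx; rewrite !ffunE.
Qed.

Lemma ptransversal_blocks x :
  ptransversal x <-> forall M, M \in rho a -> #|ran x :&: M| <= 1.
Proof.
split=> [x_tr _ /imsetP [k _ ->] | Hx u v xu xv e].
  apply/card_le1_eqP => u v; rewrite !inE.
  by move=> /andP [xu /eqP au] /andP [xv /eqP av]; apply: x_tr; rewrite ?au.
have M_rho : [set k | a k == a u] \in rho a by apply/imsetP; exists u.
by apply: (card_le1_eqP (Hx _ M_rho)); rewrite !inE ?xu ?xv ?e eqxx.
Qed.

Lemma rank_ptransversal x : ptransversal x -> rank x <= rank a.
Proof.
move=> x_tr; rewrite /rank -(card_in_imset x_tr).
apply/subset_leq_card/subsetP => _ /imsetP [_ /imsetP [i _ ->] ->].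
by apply/imsetP; exists (x i).
Qed.

Lemma mem_rideal_ptransversal x z :
  ptransversal x -> (z \in rideal a x <-> ker_sub x z).
Proof.
move=> /ptransversal_ker Hx.
split=> [/mem_rideal [->|] | Hxz]; first exact: ker_sub_refl.
  exact: ker_sub_trans (ker_sub_tcomp x a).
by apply/mem_rideal; right; exact: ker_sub_trans Hx Hxz.
Qed.

Lemma Rclass_ptransversal x : ptransversal x ->
  Rclass a x = [set y | (rho y == rho x) &&
                        [forall M in rho a, #|ran y :&: M| <= 1]].
Proof.
move=> x_tr; apply/setP => y; rewrite [in RHS]inE.
apply/idP/andP => [y_R | [/eqP Eyx /forall_inP /ptransversal_blocks y_tr]].
  have [-> | [Hxy Hyx]] := mem_Rclass y_R.
    by split; [|apply/forall_inP/ptransversal_blocks].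
  have Hyx' : ker_sub y x := ker_sub_trans (ker_sub_tcomp y a) Hyx.
  have Hxy' : ker_sub x y := ker_sub_trans (ker_sub_tcomp x a) Hxy.
  split; first by rewrite (eq_rho Hyx' Hxy').
  apply/forall_inP/ptransversal_blocks/ptransversal_ker.
  exact: ker_sub_trans Hyx Hxy'.
rewrite inE; apply/eqP/setP => z.
apply/idP/idP.
  move/(mem_rideal_ptransversal _ y_tr) => Hz; apply/(mem_rideal_ptransversal _ x_tr).
  by apply: ker_sub_trans Hz; apply: rho_ker_sub.
move/(mem_rideal_ptransversal _ x_tr) => Hz; apply/(mem_rideal_ptransversal _ y_tr).
by apply: ker_sub_trans Hz; apply: rho_ker_sub.
Qed.

Lemma Rclass_not_ptransversal x : ~ ptransversal x -> Rclass a x = [set x].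
Proof.
move=> x_ntr; apply/setP => y; rewrite in_set1.
apply/idP/eqP => [/mem_Rclass [// | [Hxy Hyx]] | ->]; last by rewrite inE.
case: x_ntr; apply/ptransversal_ker.
by apply: ker_sub_trans Hyx; apply: ker_sub_trans Hxy (ker_sub_tcomp y a).
Qed.

Lemma exists_ptransversal_relabel x : 1 < n -> ptransversal x ->
  exists p : 'I_n -> 'I_n, [/\ injective p,
    {in p @: ran x &, injective a} & exists2 u, u \in ran x & p u != u].
Proof.
move=> n_gt1 x_tr.
have [m m_ran | x_onto] := pickP [pred m | m \notin ran x]; last first.
  have ran_all u : u \in ran x by apply/negbFE; exact: x_onto.
  exists (@rev_ord n); split; first exact: rev_ord_inj.
    by move=> u v _ _; apply: x_tr; apply: ran_all.
  exists (Ordinal (ltnW n_gt1)); first exact: ran_all.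
  by apply/eqP => /(congr1 val) /=; rewrite subn1; case: n n_gt1 => [|[]].
pose v := if [pick u in ran x | a u == a m] is Some u then u
          else x (Ordinal (ltnW n_gt1)).
have v_ran : v \in ran x.
  by rewrite /v; case: pickP => [u /andP [] | _] //; apply: imset_f.
have v_blk u : u \in ran x -> a u = a m -> u = v.
  move=> u_ran aum; rewrite /v; case: pickP => [w /andP [w_ran /eqP awm] | /(_ u)].
    by apply: x_tr; rewrite ?awm.
  by rewrite u_ran aum eqxx.
have m_neq u : u \in ran x -> u != m by move=> u_ran; apply: contraNneq m_ran => <-.
exists (tperm v m); split; [exact: perm_inj | | by exists v; rewrite // tpermL eq_sym m_neq].
move=> _ _ /imsetP [u u_ran ->] /imsetP [w w_ran ->].
have [-> | uv] := eqVneq u v; have [-> | wv] := eqVneq w v => //; rewrite ?tpermL.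
- rewrite tpermD // 1?eq_sym ?m_neq // => amw.
  by move: wv; rewrite (v_blk w) ?eqxx.
- rewrite tpermD // 1?eq_sym ?m_neq // => aum.
  by move: uv; rewrite (v_blk u) ?eqxx.
- by rewrite !tpermD 1?eq_sym ?m_neq //; apply: x_tr.
Qed.

Lemma card_Rclass_ptransversal x : 1 < n -> ptransversal x -> 1 < #|Rclass a x|.
Proof.
move=> n_gt1 x_tr.
have [p [p_inj pa_inj [u u_ran pu]]] := exists_ptransversal_relabel n_gt1 x_tr.
pose y := [ffun i => p (x i)].
have y_tr : ptransversal y.
  move=> _ _ /imsetP [i _ ->] /imsetP [j _ ->]; rewrite !ffunE.
  by apply: pa_inj; apply: imset_f; apply: imset_f.
have yx : y != x.
  case/imsetP: u_ran pu => i _ -> pu.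
  by apply: contraNneq pu => yx; rewrite -[in X in _ == X]yx ffunE.
have y_R : y \in Rclass a x.
  rewrite Rclass_ptransversal // inE rho_comp_inj // eqxx /=.
  exact/forall_inP/ptransversal_blocks.
have x_R : x \in Rclass a x by rewrite inE.
apply: leq_trans (subset_leq_card (_ : [set x; y] \subset Rclass a x)).
  by rewrite cards2 eq_sym yx.
by apply/subsetP => z; rewrite in_set2 => /orP [] /eqP ->.
Qed.

End SandwichRClasses.

Theorem theorem6 (n : nat) (a x : Tn n) (hn : 1 < n) :
  ((rank x <= rank a /\ (forall M, M \in rho a -> #|ran x :&: M| <= 1)) ->
     Rclass a x = [set y : Tn n | (rho y == rho x) &&
                     [forall M in rho a, #|ran y :&: M| <= 1]]
     /\ 1 < #|Rclass a x|)
  /\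
  (~ (rank x <= rank a /\ (forall M, M \in rho a -> #|ran x :&: M| <= 1)) ->
     Rclass a x = [set x]).
Proof.
split=> [[_ /ptransversal_blocks x_tr] | x_ntr].
  by split; [apply: Rclass_ptransversal | apply: card_Rclass_ptransversal].
apply: Rclass_not_ptransversal => x_tr; apply: x_ntr.
by split; [apply: rank_ptransversal | apply/ptransversal_blocks].
Qed.
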